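(* Let $T:X\rightrightarrows X^*$ be a multivalued operator and $K\subset X$. If $T$ is pseudomonotone, then $$S(T,K)\subset S(T^\rho,K)\subset M(T,K)\quad\text{and}\quad S(T,K)\subset M(T^\rho,K)\subset M(T,K).$$ If $T$ is monotone, then moreover $$S(T,K)\subset S(T^\mu,K)\subset S(T^\rho,K)\quad\text{and}\quad M(T^\rho,K)\subset M(T^\mu,K)\subset M(T,K).$$
   Context: $X$ is a real Banach space with dual $X^*$ and pairing $\langle x,x^*\rangle=x^*(x)$. A multivalued operator $T:X\rightrightarrows X^*$ is identified with its graph $T\subset X\times X^*$; $T(x)=\{x^*:(x,x^* )\in T\}$. For $K\subset X$: $S(T,K)=\{x\in K: \exists x^*\in T(x),\ \langle y-x,x^*\rangle\ge0\ \forall y\in K\}$ and $M(T,K)=\{x\in K: \langle x-y,y^*\rangle\le0\ \forall (y,y^* )\in T \text{ with } y\in K\}$. For $(x,x^* ),(y,y^* )\in X\times X^*$, write $(x,x^* )\sim_p(y,y^* )$ if either $\min\{\langle x-y,y^*\rangle,\langle y-x,x^*\rangle\}<0$ or $\langle x-y,y^*\rangle=\langle y-x,x^*\rangle=0$. The pseudomonotone polar is $T^\rho=\{(x,x^* ): (x,x^* )\sim_p(y,y^* )\ \forall (y,y^* )\in T\}$; the monotone polar is $T^\mu=\{(x,x^* ): \langle x-y,x^*-y^*\rangle\ge0\ \forall (y,y^* )\in T\}$. $T$ is pseudomonotone if for all $(x,x^* ),(y,y^* )\in T$, $\langle y-x,x^*\rangle\ge0$ implies $\langle y-x,y^*\rangle\ge0$;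 $T$ is monotone if $\langle x-y,x^*-y^*\rangle\ge0$ for all $(x,x^* ),(y,y^* )\in T$. *)

From Stdlib Require Import Reals.
Open Scope R_scope.

Record BanachSpace := {
  carrier :> Type;
  vadd : carrier -> carrier -> carrier;
  vzero : carrier;
  vopp : carrier -> carrier;
  vscal : R -> carrier -> carrier;
  vnorm : carrier -> R;
  vadd_assoc : forall x y z, vadd x (vadd y z) = vadd (vadd x y) z;
  vadd_comm : forall x y, vadd x y = vadd y x;
  vadd_zero : forall x, vadd x vzero = x;
  vadd_opp : forall x, vadd x (vopp x) = vzero;
  vscal_one : forall x, vscal 1 x = x;
  vscal_assoc : forall a b x, vscal a (vscal b x) = vscal (a * b) x;
  vscal_distr_l : forall a x y, vscal a (vadd x y) = vadd (vscal a x) (vscal a y);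
  vscal_distr_r : forall a b x, vscal (a + b) x = vadd (vscal a x) (vscal b x);
  vnorm_zero : forall x, vnorm x = 0 -> x = vzero;
  vnorm_scal : forall a x, vnorm (vscal a x) = Rabs a * vnorm x;
  vnorm_triangle : forall x y, vnorm (vadd x y) <= vnorm x + vnorm y;
  vcomplete : forall u : nat -> carrier,
    (forall eps, 0 < eps -> exists N, forall m n, (N <= m)%nat -> (N <= n)%nat ->
        vnorm (vadd (u m) (vopp (u n))) < eps) ->
    exists l, forall eps, 0 < eps -> exists N, forall n, (N <= n)%nat ->
        vnorm (vadd (u n) (vopp l)) < eps
}.

Definition vsub (X : BanachSpace) (x y : X) : X := vadd X x (vopp X y).

Definition is_cont_linear (X : BanachSpace) (f : X -> R) : Prop :=
  (forall x y, f (vadd X x y) = f x + f y) /\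
  (forall a x, f (vscal X a x) = a * f x) /\
  (exists M, forall x, Rabs (f x) <= M * vnorm X x).

Definition dual (X : BanachSpace) : Type := { f : X -> R | is_cont_linear X f }.

Definition pairing (X : BanachSpace) (x : X) (xs : dual X) : R := proj1_sig xs x.

(* Multivalued operators X ⇉ X^*, identified with their graphs. *)
Definition operator (X : BanachSpace) : Type := X -> dual X -> Prop.

Definition S_set (X : BanachSpace) (T : operator X) (K : X -> Prop) : X -> Prop :=
  fun x => K x /\ exists xs, T x xs /\
           forall y, K y -> 0 <= pairing X (vsub X y x) xs.

Definition M_set (X : BanachSpace) (T : operator X) (K : X -> Prop) : X -> Prop :=
  fun x => K x /\ forall y ys, T y ys -> K y -> pairing X (vsub X x y) ys <= 0.

Definition sim_p (X : BanachSpace) (x : X) (xs : dual X) (y : X) (ys : dual X) : Prop :=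
  Rmin (pairing X (vsub X x y) ys) (pairing X (vsub X y x) xs) < 0 \/
  (pairing X (vsub X x y) ys = 0 /\ pairing X (vsub X y x) xs = 0).

Definition pm_polar (X : BanachSpace) (T : operator X) : operator X :=
  fun x xs => forall y ys, T y ys -> sim_p X x xs y ys.

Definition m_polar (X : BanachSpace) (T : operator X) : operator X :=
  fun x xs => forall y ys, T y ys ->
    0 <= pairing X (vsub X x y) xs - pairing X (vsub X x y) ys.

Definition pseudomonotone (X : BanachSpace) (T : operator X) : Prop :=
  forall x xs y ys, T x xs -> T y ys ->
    0 <= pairing X (vsub X y x) xs -> 0 <= pairing X (vsub X y x) ys.

Definition monotone (X : BanachSpace) (T : operator X) : Prop :=
  forall x xs y ys, T x xs -> T y ys ->
    0 <= pairing X (vsub X x y) xs - pairing X (vsub X x y) ys.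

Definition incl (X : BanachSpace) (A B : X -> Prop) : Prop := forall x, A x -> B x.

(* Everything follows from two ingredients.  First, the graph inclusions
   T ⊆ T^μ ⊆ T^ρ (the first for monotone T) and T ⊆ T^ρ (for pseudomonotone T);
   S(·,K) is monotone and M(·,K) antitone with respect to graph inclusion.
   Second, if (x,xs) ~p (y,ys) and <y-x,xs> >= 0 then <x-y,ys> <= 0.
   Hence, whenever every point of the graph of U is ~p-related to every point
   of the graph of V, S(U,K) ⊆ M(V,K); this applies to (U,V) = (T^ρ,T) by the
   definition of T^ρ, and to (U,V) = (T,T^ρ) since ~p is symmetric. *)

From Stdlib Require Import Reals Lra.
Open Scope R_scope.

Section PolarInclusions.

Variable X : BanachSpace.

Definition op_incl (T U : operator X) : Prop :=
  forall x xs, T x xs -> U x xs.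

Lemma pairing_sub (x y : X) (s : dual X) :
  pairing X (vsub X x y) s = pairing X x s - pairing X y s.
Proof.
  destruct s as [f f_lin]; unfold pairing, vsub; simpl.
  destruct f_lin as [f_add _].
  assert (f0 : f (vzero X) = 0).
  { pose proof (f_add (vzero X) (vzero X)) as H. rewrite vadd_zero in H. lra. }
  assert (f_opp : f (vopp X y) = - f y).
  { pose proof (f_add y (vopp X y)) as H. rewrite vadd_opp, f0 in H. lra. }
  rewrite f_add, f_opp. lra.
Qed.

Lemma pairing_sub_swap (x y : X) (s : dual X) :
  pairing X (vsub X y x) s = - pairing X (vsub X x y) s.
Proof. rewrite !pairing_sub. lra. Qed.

Lemma sim_pP (x : X) xs (y : X) ys :
  sim_p X x xs y ys <->
  pairing X (vsub X x y) ys < 0 \/ pairing X (vsub X y x) xs < 0 \/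
  (pairing X (vsub X x y) ys = 0 /\ pairing X (vsub X y x) xs = 0).
Proof.
  unfold sim_p, Rmin. destruct Rle_dec; split; intros H; lra.
Qed.

Lemma sim_p_sym (x : X) xs (y : X) ys :
  sim_p X x xs y ys -> sim_p X y ys x xs.
Proof. rewrite !sim_pP. lra. Qed.

Lemma sim_p_le (x : X) xs (y : X) ys :
  sim_p X x xs y ys -> 0 <= pairing X (vsub X y x) xs ->
  pairing X (vsub X x y) ys <= 0.
Proof. rewrite sim_pP. lra. Qed.

Lemma S_set_mono (T U : operator X) (K : X -> Prop) :
  op_incl T U -> incl X (S_set X T K) (S_set X U K).
Proof.
  intros TU x [Kx [xs [Txs x_sol]]]. split; [exact Kx|].
  exists xs. split; [apply TU, Txs | exact x_sol].
Qed.

Lemma M_set_anti (T U : operator X) (K : X -> Prop) :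
  op_incl T U -> incl X (M_set X U K) (M_set X T K).
Proof.
  intros TU x [Kx x_sol]. split; [exact Kx|].
  intros y ys Tys. apply x_sol, TU, Tys.
Qed.

Lemma S_set_sub_M_set (U V : operator X) (K : X -> Prop) :
  (forall x xs y ys, U x xs -> V y ys -> sim_p X x xs y ys) ->
  incl X (S_set X U K) (M_set X V K).
Proof.
  intros UV x [Kx [xs [Uxs x_sol]]]. split; [exact Kx|].
  intros y ys Vys Ky. apply (sim_p_le x xs y ys).
  - exact (UV x xs y ys Uxs Vys).
  - exact (x_sol y Ky).
Qed.

Lemma pseudomonotone_incl_pm_polar (T : operator X) :
  pseudomonotone X T -> op_incl T (pm_polar X T).
Proof.
  intros T_pm x xs Txs y ys Tys. apply sim_pP.
  pose proof (T_pm x xs y ys Txs Tys) as Hxy.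
  pose proof (T_pm y ys x xs Tys Txs) as Hyx.
  rewrite (pairing_sub_swap x y xs), (pairing_sub_swap x y ys) in *.
  destruct (Rlt_or_le (pairing X (vsub X x y) ys) 0) as [a_neg|a_nonneg]; [lra|].
  destruct (Rlt_or_le (- pairing X (vsub X x y) xs) 0) as [b_neg|b_nonneg]; [lra|].
  specialize (Hxy b_nonneg). specialize (Hyx a_nonneg). lra.
Qed.

Lemma monotone_incl_m_polar (T : operator X) :
  monotone X T -> op_incl T (m_polar X T).
Proof. intros T_mon x xs Txs y ys Tys. exact (T_mon x xs y ys Txs Tys). Qed.

Lemma m_polar_incl_pm_polar (T : operator X) :
  op_incl (m_polar X T) (pm_polar X T).
Proof.
  intros x xs x_mu y ys Tys. apply sim_pP.
  specialize (x_mu y ys Tys). rewrite (pairing_sub_swap x y xs). lra.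
Qed.

End PolarInclusions.

Theorem mainTheorem20 (X : BanachSpace) (T : operator X) (K : X -> Prop) :
  (pseudomonotone X T ->
     incl X (S_set X T K) (S_set X (pm_polar X T) K) /\
     incl X (S_set X (pm_polar X T) K) (M_set X T K) /\
     incl X (S_set X T K) (M_set X (pm_polar X T) K) /\
     incl X (M_set X (pm_polar X T) K) (M_set X T K)) /\
  (monotone X T ->
     incl X (S_set X T K) (S_set X (m_polar X T) K) /\
     incl X (S_set X (m_polar X T) K) (S_set X (pm_polar X T) K) /\
     incl X (M_set X (pm_polar X T) K) (M_set X (m_polar X T) K) /\
     incl X (M_set X (m_polar X T) K) (M_set X T K)).
Proof.
  split.
  - intros T_pm. split; [|split; [|split]].
    + apply S_set_mono, pseudomonotone_incl_pm_polar, T_pm.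
    + apply S_set_sub_M_set. intros x xs y ys x_rho Tys. exact (x_rho y ys Tys).
    + apply S_set_sub_M_set. intros x xs y ys Txs y_rho.
      apply sim_p_sym, (y_rho x xs Txs).
    + apply M_set_anti, pseudomonotone_incl_pm_polar, T_pm.
  - intros T_mon. split; [|split; [|split]].
    + apply S_set_mono, monotone_incl_m_polar, T_mon.
    + apply S_set_mono, m_polar_incl_pm_polar.
    + apply M_set_anti, m_polar_incl_pm_polar.
    + apply M_set_anti, monotone_incl_m_polar, T_mon.
Qed.
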